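(* Let $\mathcal{C}$ be an additive category and $n\geq 1$ an integer. Suppose given a commutative diagram in $\mathcal{C}$ $$\begin{array}{ccccccccccc} A_0 & \xrightarrow{f_0} & A_1 & \xrightarrow{f_1} & A_2 & \xrightarrow{f_2} & \cdots & \xrightarrow{f_{n-1}} & A_n & \xrightarrow{f_n} & A_{n+1}\\ \| & & \downarrow{\scriptstyle h_1} & & \downarrow{\scriptstyle h_2} & & & & \downarrow{\scriptstyle h_n} & & \downarrow{\scriptstyle h_{n+1}}\\ A_0 & \xrightarrow{g_0} & B_1 & \xrightarrow{g_1} & B_2 & \xrightarrow{g_2} & \cdots & \xrightarrow{g_{n-1}} & B_n & \xrightarrow{g_n} & B_{n+1} \end{array}$$ (the leftmost vertical map is $1_{A_0}$, and all squares commute: $g_0=h_1f_0$ and $h_{i+1}f_i=g_ih_i$ for $1\le i\le n$) whose two rows are right $n$-exact sequences. Then the sequence $$A_1\xrightarrow{d_0} A_2\oplus B_1\xrightarrow{d_1} A_3\oplus B_2\xrightarrow{d_2}\cdots\xrightarrow{d_{n-1}}A_{n+1}\oplus B_{n}\xrightarrow{d_{n}}B_{n+1}$$ is right $n$-exact, where $d_0=\begin{pmatrix}-f_1\\ h_1\end{pmatrix}$, $d_i=\begin{pmatrix}-f_{i+1} & 0\\ h_{i+1} & g_i\end{pmatrix}$ for $i=1,\dots,n-1$, and $d_n=(h_{n+1}\ \ g_n)$. (In other words, the diagram obtained by deleting the first column is an $n$-pushout diagram.)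
   Context: Let $f:A\to B$ be a morphism in an additive category. A weak cokernel of $f$ is a morphism $g:B\to C$ with $gf=0$ such that for every $h:B\to D$ with $hf=0$ there exists a (not necessarily unique) $k:C\to D$ with $h=kg$. For a positive integer $n$, a sequence $A_0\xrightarrow{f_0}A_1\xrightarrow{f_1}\cdots\xrightarrow{f_n}A_{n+1}$ is called right $n$-exact (and $(f_1,\dots,f_n)$ is called an $n$-cokernel of $f_0$) if for each $k=1,\dots,n-1$ the morphism $f_k$ is a weak cokernel of $f_{k-1}$, and $f_n$ is a cokernel of $f_{n-1}$. *)

From mathcomp Require Import all_boot ssralg.
Set Implicit Arguments. Unset Strict Implicit. Unset Printing Implicit Defensive.
Import GRing.Theory.
Local Open Scope ring_scope.

Record preadditive := PreAdditive {
  Ob :> Type;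
  Mor : Ob -> Ob -> zmodType;
  cmp : forall a b c : Ob, Mor b c -> Mor a b -> Mor a c;
  idm : forall a : Ob, Mor a a;
  comp_assoc : forall a b c d (h : Mor c d) (g : Mor b c) (f : Mor a b),
      cmp h (cmp g f) = cmp (cmp h g) f;
  comp_id_l : forall a b (f : Mor a b), cmp (idm b) f = f;
  comp_id_r : forall a b (f : Mor a b), cmp f (idm a) = f;
  comp_addl : forall a b c (g1 g2 : Mor b c) (f : Mor a b),
      cmp (g1 + g2) f = cmp g1 f + cmp g2 f;
  comp_addr : forall a b c (g : Mor b c) (f1 f2 : Mor a b),
      cmp g (f1 + f2) = cmp g f1 + cmp g f2
}.
Arguments cmp {p a b c}.
Arguments idm {p}.

Record additive_cat := AdditiveCat {
  PA :> preadditive;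
  zero_ob : PA;
  zero_ob_id : idm zero_ob = 0 :> Mor zero_ob zero_ob;
  bip : PA -> PA -> PA;
  bip_inl : forall a b, Mor a (bip a b);
  bip_inr : forall a b, Mor b (bip a b);
  bip_pl : forall a b, Mor (bip a b) a;
  bip_pr : forall a b, Mor (bip a b) b;
  bip_pl_inl : forall a b, cmp (bip_pl a b) (bip_inl a b) = idm a;
  bip_pr_inr : forall a b, cmp (bip_pr a b) (bip_inr a b) = idm b;
  bip_pl_inr : forall a b, cmp (bip_pl a b) (bip_inr a b) = 0;
  bip_pr_inl : forall a b, cmp (bip_pr a b) (bip_inl a b) = 0;
  bip_sum : forall a b, cmp (bip_inl a b) (bip_pl a b)
                        + cmp (bip_inr a b) (bip_pr a b) = idm (bip a b)
}.
Arguments bip_inl {a0 a b}.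
Arguments bip_inr {a0 a b}.
Arguments bip_pl {a0 a b}.
Arguments bip_pr {a0 a b}.

Section Exactness.
Variable C : preadditive.

Definition weak_cokernel (a b c : C) (f : Mor a b) (g : Mor b c) : Prop :=
  cmp g f = 0 /\
  forall (d : C) (h : Mor b d), cmp h f = 0 -> exists k : Mor c d, h = cmp k g.

Definition is_cokernel (a b c : C) (f : Mor a b) (g : Mor b c) : Prop :=
  cmp g f = 0 /\
  forall (d : C) (h : Mor b d), cmp h f = 0 -> exists! k : Mor c d, h = cmp k g.

(* The sequence  X0 --x0--> X 1 --x 1--> X 2 --> ... --x (n-1)--> X n --y--> Y
   is right n-exact (n >= 1): x 1, ..., x (n-1) are weak cokernels of their
   predecessor (x 1 of x0) and y is a cokernel of its predecessor.
   Only x 1, ..., x (n-1) are used; for n = 0 the predicate is False. *)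
Definition right_nexact (n : nat) (X : nat -> C) (X0 Y : C)
    (x0 : Mor X0 (X 1)) (x : forall i, Mor (X i) (X i.+1)) : Mor (X n) Y -> Prop :=
  match n as n0 return Mor (X n0) Y -> Prop with
  | 0 => fun _ => False
  | 1 => fun y => is_cokernel x0 y
  | m.+2 => fun y =>
      weak_cokernel x0 (x 1) /\
      (forall k, (1 <= k)%N -> (k <= m)%N -> weak_cokernel (x k) (x k.+1)) /\
      is_cokernel (x m.+1) y
  end.
End Exactness.
Arguments right_nexact {C} n X {X0 Y}.

Section PushoutSeq.
Variable C : additive_cat.
Variables (A B : nat -> C) (f : forall i, Mor (A i) (A i.+1))
          (g : forall i, Mor (B i) (B i.+1)) (h : forall i, Mor (A i) (B i)).

Definition pobj (i : nat) : C := bip (A i.+1) (B i).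

Definition pd0 : Mor (A 1%N) (pobj 1%N) :=
  cmp bip_inl (- f 1%N) + cmp bip_inr (h 1%N).

Definition pd (i : nat) : Mor (pobj i) (pobj i.+1) :=
  cmp bip_inl (cmp (- f i.+1) bip_pl)
  + cmp bip_inr (cmp (h i.+1) bip_pl)
  + cmp bip_inr (cmp (g i) bip_pr).

Definition pdlast (n : nat) : Mor (pobj n) (B n.+1) :=
  cmp (h n.+1) bip_pl + cmp (g n) bip_pr.
End PushoutSeq.

From mathcomp Require Import all_boot ssralg.
Import GRing.Theory.
Local Open Scope ring_scope.
Set Implicit Arguments. Unset Strict Implicit. Unset Printing Implicit Defensive.

(* A morphism p out of A_{i+1} (+) B_i is determined by its components
   u = p inl and v = p inr, and p d_{i-1} = 0 says exactly that u f_i = v h_i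
   and v g_{i-1} = 0.  The weak cokernel g_i lets v factor as v' g_i; then
   commutativity gives (u - v' h_{i+1}) f_i = 0, so u - v' h_{i+1} = w f_{i+1},
   and p = (-w, v') d_i.  At the last step f_n and g_n are cokernels: f_n is
   epi, which forces u = v' h_{n+1}, and v' is unique. *)

Section Preadditive.
Variable C : preadditive.

Lemma comp0l (a b c : C) (f : Mor a b) : cmp (0 : Mor b c) f = 0.
Proof.
have twice := comp_addl (0 : Mor b c) 0 f; rewrite addr0 in twice.
by apply: (addrI (cmp (0 : Mor b c) f)); rewrite addr0 -twice.
Qed.

Lemma comp0r (a b c : C) (g : Mor b c) : cmp g (0 : Mor a b) = 0.
Proof.
have twice := comp_addr g (0 : Mor a b) 0; rewrite addr0 in twice.
by apply: (addrI (cmp g (0 : Mor a b))); rewrite addr0 -twice.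
Qed.

Lemma compNl (a b c : C) (g : Mor b c) (f : Mor a b) : cmp (- g) f = - cmp g f.
Proof. by apply: (addrI (cmp g f)); rewrite -comp_addl !subrr comp0l. Qed.

Lemma compNr (a b c : C) (g : Mor b c) (f : Mor a b) : cmp g (- f) = - cmp g f.
Proof. by apply: (addrI (cmp g f)); rewrite -comp_addr !subrr comp0r. Qed.

Lemma compBl (a b c : C) (g1 g2 : Mor b c) (f : Mor a b) :
  cmp (g1 - g2) f = cmp g1 f - cmp g2 f.
Proof. by rewrite comp_addl compNl. Qed.

Lemma cokernel_epi (a b c d : C) (f : Mor a b) (g : Mor b c) (x y : Mor c d) :
  is_cokernel f g -> cmp x g = cmp y g -> x = y.
Proof.
case=> gf0 gU xg_yg.
have xgf0 : cmp (cmp x g) f = 0 by rewrite -comp_assoc gf0 comp0r.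
have [k [_ kU]] := gU _ (cmp x g) xgf0.
by rewrite -(kU x erefl) -(kU y xg_yg).
Qed.

Lemma cokernel_weak (a b c : C) (f : Mor a b) (g : Mor b c) :
  is_cokernel f g -> weak_cokernel f g.
Proof. by case=> gf0 gU; split=> // d k /gU [k' [kE _]]; exists k'. Qed.

Lemma right_nexact_weak_cokernel m (X : nat -> C) (X0 : C)
    (x0 : Mor X0 (X 1%N)) (x : forall i, Mor (X i) (X i.+1)) :
  right_nexact m.+2 X x0 x (x m.+2) ->
  forall k, (1 <= k <= m.+1)%N -> weak_cokernel (x k) (x k.+1).
Proof.
move=> [_ [wx cx]] k /andP[k_gt0]; rewrite leq_eqVlt ltnS => /orP[/eqP-> | ].
  exact: cokernel_weak.
exact: wx.
Qed.

End Preadditive.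

Section Biproduct.
Variable C : additive_cat.

Definition bip_col (x a b : C) (u : Mor x a) (v : Mor x b) : Mor x (bip a b) :=
  cmp bip_inl u + cmp bip_inr v.

Definition bip_row (a b y : C) (u : Mor a y) (v : Mor b y) : Mor (bip a b) y :=
  cmp u bip_pl + cmp v bip_pr.

Definition bip_lowmx (a1 b1 a2 b2 : C) (a : Mor a1 a2) (c : Mor a1 b2)
    (d : Mor b1 b2) : Mor (bip a1 b1) (bip a2 b2) :=
  cmp bip_inl (cmp a bip_pl) + cmp bip_inr (cmp c bip_pl)
  + cmp bip_inr (cmp d bip_pr).

Lemma bip_hom_ext (a b y : C) (p q : Mor (bip a b) y) :
  cmp p bip_inl = cmp q bip_inl -> cmp p bip_inr = cmp q bip_inr -> p = q.
Proof.
move=> eq_l eq_r; rewrite -(comp_id_r p) -(comp_id_r q) -bip_sum !comp_addr.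
by rewrite !comp_assoc eq_l eq_r.
Qed.

Lemma bip_row_inl (a b y : C) (u : Mor a y) (v : Mor b y) :
  cmp (bip_row u v) bip_inl = u.
Proof.
by rewrite comp_addl -!comp_assoc bip_pl_inl bip_pr_inl comp_id_r comp0r addr0.
Qed.

Lemma bip_row_inr (a b y : C) (u : Mor a y) (v : Mor b y) :
  cmp (bip_row u v) bip_inr = v.
Proof.
by rewrite comp_addl -!comp_assoc bip_pl_inr bip_pr_inr comp_id_r comp0r add0r.
Qed.

Lemma comp_bip_col (x a b y : C) (p : Mor (bip a b) y)
    (u : Mor x a) (v : Mor x b) :
  cmp p (bip_col u v) = cmp (cmp p bip_inl) u + cmp (cmp p bip_inr) v.
Proof. by rewrite comp_addr !comp_assoc. Qed.

Lemma comp_bip_colN_eq0 (x a b y : C) (p : Mor (bip a b) y)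
    (u : Mor x a) (v : Mor x b) :
  cmp p (bip_col (- u) v) = 0 <-> cmp (cmp p bip_inl) u = cmp (cmp p bip_inr) v.
Proof.
rewrite comp_bip_col compNr addrC.
split=> [/eqP | ->]; last exact: subrr.
by rewrite subr_eq0 => /eqP.
Qed.

Lemma bip_lowmx_inl (a1 b1 a2 b2 : C) (a : Mor a1 a2) (c : Mor a1 b2)
    (d : Mor b1 b2) :
  cmp (bip_lowmx a c d) bip_inl = bip_col a c.
Proof.
rewrite !comp_addl -!comp_assoc bip_pl_inl bip_pr_inl !comp_id_r !comp0r.
by rewrite addr0.
Qed.

Lemma bip_lowmx_inr (a1 b1 a2 b2 : C) (a : Mor a1 a2) (c : Mor a1 b2)
    (d : Mor b1 b2) :
  cmp (bip_lowmx a c d) bip_inr = cmp bip_inr d.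
Proof.
rewrite !comp_addl -!comp_assoc bip_pl_inr bip_pr_inr !comp_id_r !comp0r.
by rewrite !add0r.
Qed.

Lemma comp_bip_lowmx_eq0 (a1 b1 a2 b2 y : C) (p : Mor (bip a2 b2) y)
    (a : Mor a1 a2) (c : Mor a1 b2) (d : Mor b1 b2) :
  cmp p (bip_lowmx a c d) = 0 <->
  cmp p (bip_col a c) = 0 /\ cmp (cmp p bip_inr) d = 0.
Proof.
split=> [p0 | [pl0 pr0]].
  rewrite -(bip_lowmx_inl a c d) -comp_assoc -(bip_lowmx_inr a c d).
  by rewrite !comp_assoc p0 !comp0l.
apply: bip_hom_ext; rewrite comp0l -comp_assoc ?bip_lowmx_inl //.
by rewrite bip_lowmx_inr comp_assoc.
Qed.

End Biproduct.

Section PushoutStep.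
Variable C : additive_cat.
Variables (A0 A1 A2 A3 B1 B2 : C) (f0 : Mor A0 A1) (f1 : Mor A1 A2)
  (f2 : Mor A2 A3) (g1 : Mor B1 B2) (h1 : Mor A1 B1) (h2 : Mor A2 B2).
Hypothesis square : cmp h2 f1 = cmp g1 h1.

Lemma factor_through_bip_lowmx (B0 y : C) (g0 : Mor B0 B1)
    (p : Mor (bip A2 B1) y) :
  weak_cokernel f1 f2 -> weak_cokernel g0 g1 ->
  cmp (cmp p bip_inl) f1 = cmp (cmp p bip_inr) h1 ->
  cmp (cmp p bip_inr) g0 = 0 ->
  exists k, p = cmp k (bip_lowmx (- f2) h2 g1).
Proof.
move=> [_ wf] [_ wg] pf_ph pg0.
have [v' vE] := wg _ _ pg0.
have [w wE] : exists w, cmp p bip_inl - cmp v' h2 = cmp w f2.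
  apply: wf; rewrite compBl -[cmp (cmp v' h2) f1]comp_assoc square comp_assoc.
  by rewrite -vE pf_ph subrr.
exists (bip_row (- w) v'); apply: bip_hom_ext.
  rewrite -comp_assoc bip_lowmx_inl comp_bip_col bip_row_inl bip_row_inr.
  by rewrite compNl compNr opprK -wE subrK.
by rewrite -comp_assoc bip_lowmx_inr comp_assoc bip_row_inr.
Qed.

Lemma factor_uniquely_through_bip_row (B0 y : C) (g0 : Mor B0 B1)
    (p : Mor (bip A2 B1) y) :
  is_cokernel f0 f1 -> is_cokernel g0 g1 ->
  cmp (cmp p bip_inl) f1 = cmp (cmp p bip_inr) h1 ->
  cmp (cmp p bip_inr) g0 = 0 ->
  exists! k, p = cmp k (bip_row h2 g1).
Proof.
move=> cf [_ cg] pf_ph pg0.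
have [v' [vE v'U]] := cg _ _ pg0.
have uE : cmp p bip_inl = cmp v' h2.
  apply: (cokernel_epi cf).
  by rewrite -[cmp (cmp v' h2) f1]comp_assoc square comp_assoc -vE.
exists v'; split.
  by apply: bip_hom_ext; rewrite -comp_assoc ?bip_row_inl ?bip_row_inr.
by move=> k pE; apply: v'U; rewrite pE -comp_assoc bip_row_inr.
Qed.

Lemma bip_lowmx_comp_col : cmp f2 f1 = 0 ->
  cmp (bip_lowmx (- f2) h2 g1) (bip_col (- f1) h1) = 0.
Proof.
move=> f21; apply/comp_bip_colN_eq0.
rewrite bip_lowmx_inl bip_lowmx_inr /bip_col comp_addl -!comp_assoc.
by rewrite compNl f21 oppr0 comp0r add0r square.
Qed.

Lemma bip_row_comp_col : cmp (bip_row h2 g1) (bip_col (- f1) h1) = 0.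
Proof. by apply/comp_bip_colN_eq0; rewrite bip_row_inl bip_row_inr. Qed.

Lemma comp_inr_hf0_eq0 (y : C) (p : Mor (bip A2 B1) y) :
  cmp f1 f0 = 0 -> cmp (cmp p bip_inl) f1 = cmp (cmp p bip_inr) h1 ->
  cmp (cmp p bip_inr) (cmp h1 f0) = 0.
Proof.
by move=> f10 pf_ph; rewrite comp_assoc -pf_ph -comp_assoc f10 comp0r.
Qed.

Lemma bip_col_weak_cokernel :
  cmp f1 f0 = 0 -> weak_cokernel f1 f2 -> weak_cokernel (cmp h1 f0) g1 ->
  weak_cokernel (bip_col (- f1) h1) (bip_lowmx (- f2) h2 g1).
Proof.
move=> f10 wf wg; split; first exact: bip_lowmx_comp_col wf.1.
move=> y p /comp_bip_colN_eq0 pf_ph.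
exact: factor_through_bip_lowmx wf wg pf_ph (comp_inr_hf0_eq0 f10 pf_ph).
Qed.

Lemma bip_lowmx_weak_cokernel (B0 : C) (g0 : Mor B0 B1) :
  weak_cokernel f1 f2 -> weak_cokernel g0 g1 ->
  weak_cokernel (bip_lowmx (- f1) h1 g0) (bip_lowmx (- f2) h2 g1).
Proof.
move=> wf wg; split.
  apply/comp_bip_lowmx_eq0; split; first exact: bip_lowmx_comp_col wf.1.
  by rewrite bip_lowmx_inr -comp_assoc wg.1 comp0r.
move=> y p /comp_bip_lowmx_eq0[/comp_bip_colN_eq0].
exact: factor_through_bip_lowmx.
Qed.

Lemma bip_col_cokernel :
  is_cokernel f0 f1 -> is_cokernel (cmp h1 f0) g1 ->
  is_cokernel (bip_col (- f1) h1) (bip_row h2 g1).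
Proof.
move=> cf cg; split; first exact: bip_row_comp_col.
move=> y p /comp_bip_colN_eq0 pf_ph.
have pg0 := comp_inr_hf0_eq0 cf.1 pf_ph.
exact: factor_uniquely_through_bip_row cf cg pf_ph pg0.
Qed.

Lemma bip_lowmx_cokernel (B0 : C) (g0 : Mor B0 B1) :
  is_cokernel f0 f1 -> is_cokernel g0 g1 ->
  is_cokernel (bip_lowmx (- f1) h1 g0) (bip_row h2 g1).
Proof.
move=> cf cg; split.
  apply/comp_bip_lowmx_eq0; split; first exact: bip_row_comp_col.
  by rewrite bip_row_inr cg.1.
move=> y p /comp_bip_lowmx_eq0[/comp_bip_colN_eq0].
exact: factor_uniquely_through_bip_row.
Qed.

End PushoutStep.

Theorem lemma2p7 (C : additive_cat) (n : nat) (A B : nat -> C)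
    (f : forall i, Mor (A i) (A i.+1))
    (g0 : Mor (A 0%N) (B 1%N)) (g : forall i, Mor (B i) (B i.+1))
    (h : forall i, Mor (A i) (B i)) :
  (1 <= n)%N ->
  g0 = cmp (h 1%N) (f 0%N) ->
  (forall i, (1 <= i <= n)%N -> cmp (h i.+1) (f i) = cmp (g i) (h i)) ->
  right_nexact n A (f 0%N) f (f n) ->
  right_nexact n B g0 g (g n) ->
  right_nexact n (pobj A B) (pd0 f h) (pd f g h) (pdlast g h n).
Proof.
move=> n_gt0 -> square; case: n n_gt0 square => [|[|m]] // _ square.
  exact: bip_col_cokernel (square 1%N isT).
move=> cA; have wA := right_nexact_weak_cokernel cA.
case: cA => [[f10 _] [_ cA]] [wB0 [wB cB]].
split; [|split].
- exact: bip_col_weak_cokernel (square 1%N isT) f10 (wA 1%N isT) wB0.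
- move=> k k_gt0 k_le_m.
  exact: (bip_lowmx_weak_cokernel (square k.+1 (leqW k_le_m)) (wA k.+1 k_le_m)
    (wB k k_gt0 k_le_m)).
- exact: (bip_lowmx_cokernel (square m.+2 (leqnn m.+2)) cA cB).
Qed.
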